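(* Fix integers $s_l,s_h\ge1$ and let $N=s_ls_h$. For parameters $p_h\ge p_l\ge0$, let the three-layer hierarchical random graph $\mathcal{G}$ have co-occurrence (adjacency) matrix $P\in\mathbb{R}^{N\times N}$ obtained by partitioning the $N$ vertices into $s_l$ groups of $s_h$ consecutive vertices and setting $P_{ij}=p_h$ if $i,j$ lie in the same group and $P_{ij}=p_l$ otherwise, with the entries normalized to sum to one. Let $\mathcal{G}'$ be another such graph with the same $s_l,s_h$ and parameters $p_h'\ge p_l'\ge0$ (entries also summing to one). If $p_h-p_l\le p_h'-p_l'$, then for every $t$, $\sigma_t\le\sigma_t'$, where $\sigma_t,\sigma_t'$ denote the $t$-th largest singular values of the co-occurrence matrices of $\mathcal{G}$ and $\mathcal{G}'$, respectively.
   Context: In a hierarchical random graph, the leaves of a hierarchical tree are the graph's vertices and the probability of an edge between two vertices is the probability attached to their lowest common ancestor; here the tree has two hidden layers, with $p_l$ the (high-level) connection probability across groups and $p_h$ the (lower-level) connection probability within a group. *)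

From HB Require Import structures.
From mathcomp Require Import all_boot all_order all_algebra.
Set Implicit Arguments. Unset Strict Implicit. Unset Printing Implicit Defensive.
Import Order.TTheory GRing.Theory Num.Theory.
Local Open Scope ring_scope.

Definition hrg_matrix (R : ringType) (sl sh : nat) (pl ph : R)
  : 'M[R]_(sl * sh) :=
  \matrix_(i, j) (if (i %/ sh == j %/ sh)%N then ph else pl).

Definition singular_values (R : rcfType) (n : nat) (A : 'M[R]_n) (s : seq R)
  : Prop :=
  [/\ size s = n,
      all (fun x => 0 <= x) s,
      sorted (fun x y => y <= x) s &
      char_poly (A^T *m A) = \prod_(x <- s) ('X - (x ^+ 2)%:P)].

From HB Require Import structures.
From mathcomp Require Import all_boot all_order all_algebra.
From mathcomp Require Import ring.
Set Implicit Arguments. Unset Strict Implicit. Unset Printing Implicit Defensive.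
Import Order.TTheory GRing.Theory Num.Theory.
Local Open Scope ring_scope.

(* Writing f i for the group of vertex i, the co-occurrence matrix is
   P = E C E^T, where E is the 0/1 matrix of f and C = (ph - pl) I + pl J
   is the sl x sl matrix of group-level probabilities.  Every group has sh
   vertices, so E^T E = sh I and, by Sylvester's identity, P^T P has the
   spectrum of sh^2 C^T C (a scalar plus a constant matrix) padded with zeros.
   The singular values of P are therefore sh (sl pl + ph - pl) once,
   sh (ph - pl) with multiplicity sl - 1, and 0.  The normalisation fixes the
   largest one (it is 1 / N), and the middle one increases with ph - pl. *)

Lemma ltn_ord_divn m n (i : 'I_(m * n)) : (i %/ n < m)%N.
Proof.
case: n i => [|n] i; last by rewrite ltn_divLR.
by case: i; rewrite muln0.
Qed.

Definition ord_divn m n (i : 'I_(m * n)) : 'I_m := Ordinal (ltn_ord_divn i).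

Lemma divn_in_block m n j : (m * n <= j < m.+1 * n)%N -> (j %/ n)%N = m.
Proof.
case: n => [|n]; first by rewrite !muln0 ltn0 andbF.
move=> /andP[lo hi]; apply/eqP.
by rewrite eqn_leq leq_divRL // lo andbT -ltnS ltn_divLR.
Qed.

Lemma card_fiber_ord_divn m n (g : 'I_m) :
  #|[pred i : 'I_(m * n) | ord_divn i == g]| = n.
Proof.
rewrite -sum1_card big_mkcond /=.
transitivity (\sum_(i < m * n) (ord_divn i == g))%N.
  by apply: eq_bigr => i _; rewrite inE; case: (_ == _).
rewrite -(big_mkord xpredT (fun i => ((i %/ n)%N == g : nat))) big_nat_mul.
transitivity (\sum_(0 <= a < m) (a == g) * n)%N.
  apply: eq_big_nat => a _.
  rewrite (eq_big_nat _ _ (F2 := fun=> (a == g : nat))).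
    by rewrite sum_nat_const_nat mulSn addnK mulnC.
  by move=> j /divn_in_block ->.
rewrite big_mkord (bigD1 g) //= eqxx mul1n big1 ?addn0 // => a.
by rewrite val_eqE => /negbTE ->.
Qed.

Lemma sum_comp_const_fibers (I J : finType) (f : I -> J) k :
    (forall j, #|[pred i | f i == j]| = k) ->
  forall (V : nmodType) (F : J -> V), \sum_i F (f i) = (\sum_j F j) *+ k.
Proof.
move=> card_fiber V F; rewrite (partition_big f xpredT) //= -sumrMnl.
apply: eq_bigr => j _.
rewrite (eq_bigr (fun=> F j)) => [|i /eqP-> //].
by rewrite sumr_const card_fiber.
Qed.

Lemma trmx_rowsub_mul_const_fibers (R : nzRingType) m n p q (f : 'I_m -> 'I_n)
    k (A : 'M[R]_(n, p)) (B : 'M[R]_(n, q)) :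
  (forall j, #|[pred i | f i == j]| = k) ->
  (rowsub f A)^T *m rowsub f B = (A^T *m B) *+ k.
Proof.
move=> card_fiber; apply/matrixP => g h; rewrite mulmxnE !mxE.
under eq_bigr => j _ do rewrite !mxE.
rewrite (sum_comp_const_fibers card_fiber (fun j => A j g * B j h)).
by congr (_ *+ _); apply: eq_bigr => j _; rewrite mxE.
Qed.

Lemma mxsub_mulmx_rowsub1 (R : nzRingType) m n p q (f : 'I_p -> 'I_m)
    (g : 'I_q -> 'I_n) (A : 'M[R]_(m, n)) :
  mxsub f g A = rowsub f 1%:M *m A *m (rowsub g 1%:M)^T.
Proof.
by rewrite trmx_mxsub trmx1 -mulmxA mulmx_colsub mulmx1 -mxsub_mul mul1mx.
Qed.

Lemma mulmx_const (R : nzRingType) m n p (a b : R) :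
  (const_mx a : 'M_(m, n)) *m (const_mx b : 'M_(n, p)) = const_mx (a * b *+ n).
Proof.
apply/matrixP => i j; rewrite !mxE.
by under eq_bigr do rewrite !mxE; rewrite sumr_const card_ord.
Qed.

(* Sylvester's determinant identity, from the two factorisations of
   [[y, A], [B, 1]] by [[1, 0], [-B, y]] on either side. *)
Lemma det_scalar_sub_mulmxC (R : comNzRingType) m n (A : 'M[R]_(m, n))
    (B : 'M[R]_(n, m)) (y : R) :
  y ^+ n * \det (y%:M - A *m B) = y ^+ m * \det (y%:M - B *m A).
Proof.
pose Q := block_mx (y%:M : 'M_m) A B (1%:M : 'M_n).
pose L := block_mx (1%:M : 'M_m) 0 (- B) (y%:M : 'M_n).
have QL : Q *m L = block_mx (y%:M - A *m B) (A *m y%:M) 0 y%:M.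
  by rewrite mulmx_block !mulmx1 !mulmx0 !add0r !mulmxN !mul1mx subrr.
have LQ : L *m Q = block_mx y%:M A 0 (y%:M - B *m A).
  rewrite mulmx_block !mulmx1 !mul1mx !mul0mx ?add0r ?addr0 !mulNmx.
  by rewrite mul_mx_scalar mul_scalar_mx addNr addrC.
have detL : \det L = y ^+ n by rewrite det_lblock !det_scalar expr1n mul1r.
have := congr1 determinant QL; have := congr1 determinant LQ.
rewrite !det_mulmx !det_ublock !det_scalar detL => detLQ detQL.
by rewrite mulrC -detQL mulrC detLQ.
Qed.

Lemma char_poly_mulmxC (F : fieldType) m n (A : 'M[F]_(m, n)) (B : 'M_(n, m)) :
  'X^n * char_poly (A *m B) = 'X^m * char_poly (B *m A).
Proof.
by rewrite /char_poly /char_poly_mx !map_mxM; apply: det_scalar_sub_mulmxC.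
Qed.

Lemma char_poly_scalar_add_const (F : fieldType) n (a c : F) : (0 < n)%N ->
  char_poly (a%:M + const_mx c : 'M_n) =
  ('X - a%:P) ^+ n.-1 * ('X - (a + c *+ n)%:P).
Proof.
case: n => // n _ /=.
set y := 'X - a%:P.
have y_neq0 : y != 0 by rewrite polyXsubC_eq0.
pose u : 'M[{poly F}]_(n.+1, 1) := const_mx 1.
pose v : 'M[{poly F}]_(1, n.+1) := const_mx c%:P.
rewrite /char_poly.
have -> : char_poly_mx (a%:M + const_mx c : 'M_n.+1) = y%:M - u *m v.
  apply/matrixP => i j; rewrite !mxE big_ord1 !mxE mul1r.
  by case: (i == j); rewrite /y ?mulr1n ?mulr0n polyCD; ring.
have vu : v *m u = (c%:P *+ n.+1)%:M.
  apply/matrixP => i j; rewrite !ord1 !mxE eqxx mulr1n.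
  by under eq_bigr do rewrite !mxE mulr1; rewrite sumr_const card_ord.
apply: (mulfI y_neq0); rewrite -[X in X * _]expr1 det_scalar_sub_mulmxC.
rewrite vu -raddfB det_scalar1 exprS -mulrA.
by rewrite /y polyCD polyCMn opprD addrA.
Qed.

Lemma path_ge_nseq_cat d (T : porderType d) (a b c : T) k m :
  (c <= b)%O -> (b <= a)%O -> path >=%O a (nseq k b ++ nseq m c).
Proof.
move=> le_cb le_ba.
have path_c x : (c <= x)%O -> path >=%O x (nseq m c).
  by elim: m x => //= m IHm x le_cx; rewrite le_cx IHm.
elim: k a le_ba => [|k IHk] a le_ba /=; first exact/path_c/(le_trans le_cb).
by rewrite le_ba IHk.
Qed.

Lemma singular_values_uniq (R : rcfType) n (A : 'M[R]_n) s1 s2 :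
  singular_values A s1 -> singular_values A s2 -> s1 = s2.
Proof.
move=> [_ s1_ge0 s1_sorted charA1] [_ s2_ge0 s2_sorted charA2].
have sq_perm : perm_eq [seq x ^+ 2 | x <- s1] [seq x ^+ 2 | x <- s2].
  by apply: prod_XsubC_eq; rewrite !big_map -charA1 -charA2.
have sqrt_sq (s : seq R) :
    all (>= 0) s -> [seq Num.sqrt y | y <- [seq x ^+ 2 | x <- s]] = s.
  move=> /allP s_ge0; rewrite -map_comp map_id_in // => x /s_ge0 x_ge0 /=.
  by rewrite sqrtr_sqr ger0_norm.
apply: (sorted_eq ge_trans ge_anti) => //.
by rewrite -(sqrt_sq s1) // -(sqrt_sq s2) // perm_map.
Qed.

Definition hrg_core_mx (R : nzRingType) m (pl ph : R) : 'M[R]_m :=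
  (ph - pl)%:M + const_mx pl.

Definition group_mx (R : nzRingType) m n : 'M[R]_(m * n, m) :=
  rowsub (@ord_divn m n) 1%:M.

Definition hrg_sv_top (R : nzRingType) sl sh (pl ph : R) : R :=
  sh%:R * (sl%:R * pl + (ph - pl)).

Definition hrg_sv_mid (R : nzRingType) sh (pl ph : R) : R := sh%:R * (ph - pl).

Definition hrg_svals (R : nzRingType) sl sh (pl ph : R) : seq R :=
  hrg_sv_top sl sh pl ph ::
    nseq sl.-1 (hrg_sv_mid sh pl ph) ++ nseq (sl * sh - sl) 0.

Lemma hrg_matrixE (R : nzRingType) m n (pl ph : R) :
  hrg_matrix m n pl ph =
  mxsub (@ord_divn m n) (@ord_divn m n) (hrg_core_mx m pl ph).
Proof.
apply/matrixP => i j; rewrite !mxE -val_eqE /=.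
by case: (_ == _); rewrite ?mulr1n ?mulr0n ?add0r ?subrK.
Qed.

Lemma hrg_matrix_factor (R : nzRingType) m n (pl ph : R) :
  hrg_matrix m n pl ph =
  group_mx R m n *m hrg_core_mx m pl ph *m (group_mx R m n)^T.
Proof. by rewrite hrg_matrixE mxsub_mulmx_rowsub1. Qed.

Lemma group_mx_gram (R : nzRingType) m n :
  (group_mx R m n)^T *m group_mx R m n = n%:R%:M.
Proof.
rewrite (trmx_rowsub_mul_const_fibers _ _ (@card_fiber_ord_divn m n)).
by rewrite trmx1 mulmx1 -raddfMn.
Qed.

Lemma hrg_core_gram (R : comNzRingType) m (pl ph : R) :
  (hrg_core_mx m pl ph)^T *m hrg_core_mx m pl ph =
  ((ph - pl) ^+ 2)%:M + const_mx (pl * (m%:R * pl + 2 * (ph - pl))).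
Proof.
rewrite /hrg_core_mx [_^T]raddfD /= tr_scalar_mx trmx_const mulmxDl !mulmxDr.
rewrite -scalar_mxM mul_scalar_mx mul_mx_scalar mulmx_const !scalemx_const.
by apply/matrixP => i j; rewrite !mxE; ring.
Qed.

Lemma hrg_core_row_sum (R : nzRingType) m (pl ph : R) (g : 'I_m) :
  \sum_h hrg_core_mx m pl ph g h = m%:R * pl + (ph - pl).
Proof.
under eq_bigr do rewrite !mxE.
rewrite big_split /= sumr_const card_ord (bigD1 g) //= eqxx mulr1n big1 => [|h].
  by rewrite addr0 addrC mulr_natl.
by rewrite eq_sym => /negbTE ->.
Qed.

Lemma hrg_sum_entries (R : nzRingType) sl sh (pl ph : R) :
  \sum_i \sum_j hrg_matrix sl sh pl ph i j =
  (sl * sh)%:R * hrg_sv_top sl sh pl ph.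
Proof.
have fiber := @card_fiber_ord_divn sl sh.
rewrite hrg_matrixE; under eq_bigr do under eq_bigr do rewrite mxE.
under eq_bigr do rewrite (sum_comp_const_fibers fiber (hrg_core_mx sl pl ph _)).
rewrite (sum_comp_const_fibers fiber
  (fun g => (\sum_h hrg_core_mx sl pl ph g h) *+ sh)).
under eq_bigr do rewrite hrg_core_row_sum.
rewrite sumr_const card_ord -!mulrnA /hrg_sv_top mulrA -natrM !mulr_natl.
by rewrite mulnC.
Qed.

Lemma char_poly_hrg_gram (F : fieldType) sl sh (pl ph : F) :
  (0 < sl)%N -> (0 < sh)%N ->
  char_poly ((hrg_matrix sl sh pl ph)^T *m hrg_matrix sl sh pl ph) =
  'X^(sl * sh - sl) * ('X - (hrg_sv_mid sh pl ph ^+ 2)%:P) ^+ sl.-1 *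
    ('X - (hrg_sv_top sl sh pl ph ^+ 2)%:P).
Proof.
move=> sl_gt0 sh_gt0; rewrite hrg_matrix_factor.
set E := group_mx F sl sh; set C := hrg_core_mx sl pl ph.
set B := sh%:R *: (C^T *m C) *m E^T.
have gram : (E *m C *m E^T)^T *m (E *m C *m E^T) = E *m B.
  rewrite !trmx_mul trmxK !mulmxA -[_ *m E^T *m E]mulmxA group_mx_gram.
  by rewrite mul_mx_scalar scalemxAr !scalemxAl !mulmxA.
have BE : B *m E = (hrg_sv_mid sh pl ph ^+ 2)%:M +
    const_mx (sh%:R ^+ 2 * (pl * (sl%:R * pl + 2 * (ph - pl)))).
  rewrite -mulmxA group_mx_gram mul_mx_scalar scalerA hrg_core_gram scalerDr.
  rewrite scale_scalar_mx scalemx_const /hrg_sv_mid.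
  by congr (_%:M + const_mx _); ring.
rewrite gram; have := char_poly_mulmxC E B.
rewrite BE char_poly_scalar_add_const //.
have -> : hrg_sv_mid sh pl ph ^+ 2 +
    sh%:R ^+ 2 * (pl * (sl%:R * pl + 2 * (ph - pl))) *+ sl =
    hrg_sv_top sl sh pl ph ^+ 2.
  by rewrite /hrg_sv_mid /hrg_sv_top -mulr_natr; ring.
have -> : 'X^(sl * sh) = 'X^sl * 'X^(sl * sh - sl) :> {poly F}.
  by rewrite -exprD subnKC // leq_pmulr.
by rewrite -!mulrA => /(mulfI (monic_neq0 (monicXn _ _))).
Qed.

Lemma hrg_singular_values (R : rcfType) sl sh (pl ph : R) :
  (0 < sl)%N -> (0 < sh)%N -> 0 <= pl -> pl <= ph ->
  singular_values (hrg_matrix sl sh pl ph) (hrg_svals sl sh pl ph).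
Proof.
move=> sl_gt0 sh_gt0 pl_ge0 pl_le_ph.
have mid_ge0 : 0 <= hrg_sv_mid sh pl ph by rewrite mulr_ge0 ?subr_ge0.
have mid_le_top : hrg_sv_mid sh pl ph <= hrg_sv_top sl sh pl ph.
  by rewrite ler_wpM2l // lerDr mulr_ge0.
split.
- by rewrite /= size_cat !size_nseq -addSn prednK // subnKC // leq_pmulr.
- rewrite /= all_cat !all_nseq mid_ge0 lexx !orbT !andbT.
  exact: le_trans mid_ge0 mid_le_top.
- exact: (path_ge_nseq_cat _ _ mid_ge0 mid_le_top).
rewrite char_poly_hrg_gram // /hrg_svals big_cons big_cat /= !big_nseq.
rewrite !iter_mulr_1.
by rewrite expr0n subr0 mulrC [_ ^+ sl.-1 * _]mulrC mulrA.
Qed.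

Lemma hrg_svals_le (R : numDomainType) sl sh (pl ph pl' ph' : R) :
  hrg_sv_top sl sh pl ph = hrg_sv_top sl sh pl' ph' -> ph - pl <= ph' - pl' ->
  forall t, (hrg_svals sl sh pl ph)`_t <= (hrg_svals sl sh pl' ph')`_t.
Proof.
move=> top_eq gap_le [|t] /=; first by rewrite top_eq.
rewrite !nth_cat !size_nseq.
case: ifP => _; rewrite !nth_nseq; case: ifP => // _.
by rewrite ler_wpM2l.
Qed.

Theorem theorem4p2 (R : rcfType) (sl sh : nat) (pl ph pl' ph' : R)
  (s s' : seq R) :
  (0 < sl)%N -> (0 < sh)%N ->
  0 <= pl -> pl <= ph -> 0 <= pl' -> pl' <= ph' ->
  \sum_(i < sl * sh) \sum_(j < sl * sh) hrg_matrix sl sh pl ph i j = 1 ->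
  \sum_(i < sl * sh) \sum_(j < sl * sh) hrg_matrix sl sh pl' ph' i j = 1 ->
  ph - pl <= ph' - pl' ->
  singular_values (hrg_matrix sl sh pl ph) s ->
  singular_values (hrg_matrix sl sh pl' ph') s' ->
  forall t : 'I_(sl * sh), s`_t <= s'`_t.
Proof.
move=> sl_gt0 sh_gt0 pl_ge0 pl_le_ph pl'_ge0 pl'_le_ph' sum1 sum1' gap_le.
move=> sv sv' t.
have N_neq0 : (sl * sh)%:R != 0 :> R.
  by rewrite pnatr_eq0 -lt0n muln_gt0 sl_gt0.
have top_eq : hrg_sv_top sl sh pl ph = hrg_sv_top sl sh pl' ph'.
  by apply: (mulfI N_neq0); rewrite -!hrg_sum_entries sum1 sum1'.
have [sv0 sv0'] := (hrg_singular_values sl_gt0 sh_gt0 pl_ge0 pl_le_ph,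
                    hrg_singular_values sl_gt0 sh_gt0 pl'_ge0 pl'_le_ph').
rewrite (singular_values_uniq sv sv0) (singular_values_uniq sv' sv0').
exact: hrg_svals_le.
Qed.
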